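(* For every choice of the distributions $P(\cdot\mid x)$, every choice of regressors $r_{v,i}:X\to[0,1]$ ($v$ internal, $2\le i\le k$), and every pair $(x,y)\in X\times Y$, $$\bigl(Q(y\mid x)-P(y\mid x)\bigr)^2\;\le\;4\,m^2\Bigl(\frac{k-1}{k}\Bigr)^2\varepsilon^2,\qquad m=\log_k n,$$ where $\varepsilon^2=\frac{1}{(k-1)m}\sum_{v\in\mathrm{path}(y)}\sum_{i=2}^{k}\bigl(r_{v,i}(x)-P_v(Y_{v,i}\mid x)\bigr)^2$ is the average squared error of the $(k-1)m$ non-trivial regressors at the nodes on the path to $y$.
   Context: Let $X$ be an arbitrary set and $Y=\{1,\dots,n\}$. For each $x\in X$, $P(\cdot\mid x)$ is a probability distribution on $Y$; for $S\subseteq Y$ write $P(S\mid x)=\sum_{y\in S}P(y\mid x)$. The $0/1$ matrices $C_{2^t}$ are defined recursively by $C_2=\begin{bmatrix}1&1\\1&0\end{bmatrix}$ and $C_{2s}=\begin{bmatrix}C_s&C_s\\ C_s&J-C_s\end{bmatrix}$, where $J$ is the all-ones $s\times s$ matrix; row $1$ of each $C_{2^t}$ is all ones. Let $k\ge 2$ be a power of $2$ and $n=k^m$ for an integer $m\ge1$. Fix a complete $k$-ary rooted tree of depth $m$ whose $n$ leaves are in one-to-one correspondence with $Y$; each internal node $v$ has children $c_1,\dots,c_k$, and $T(u)\subseteq Y$ denotes the set of labels in the subtree rooted at $u$. For a label $y$, $\mathrm{path}(y)$ is the set of internal nodes on the root-to-$y$ path, and for $v\in\mathrm{path}(y)$,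 $j_v(y)$ is the index of the child of $v$ whose subtree contains $y$. For internal $v$, $P_v(c_j\mid x)=P(T(c_j)\mid x)/P(T(v)\mid x)$ when $P(T(v)\mid x)>0$ (an arbitrary probability distribution on the children otherwise), and for a set $S$ of children $P_v(S\mid x)=\sum_{c\in S}P_v(c\mid x)$. For $i\in\{1,\dots,k\}$, $Y_{v,i}=\{c_j: C_k(i,j)=1\}$. At each internal node $v$ there are $k-1$ regressors $r_{v,i}:X\to[0,1]$, $i=2,\dots,k$, and we set $r_{v,1}\equiv1$. The node estimate is $Q_v(c_j\mid x)=2\cdot\frac1k\sum_{i=1}^k\bigl[C_k(i,j)r_{v,i}(x)+(1-C_k(i,j))(1-r_{v,i}(x))\bigr]-1$, and the overall estimate is $Q(y\mid x)=\prod_{v\in\mathrm{path}(y)}Q_v(c_{j_v(y)}\mid x)$. *)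

From HB Require Import structures.
From mathcomp Require Import all_boot all_order all_algebra.
Set Implicit Arguments. Unset Strict Implicit. Unset Printing Implicit Defensive.
Import Order.TTheory GRing.Theory Num.Theory.
Local Open Scope ring_scope.

(* The 0/1 matrix C_{2^t}, 0-indexed: Cmat t i j = C_{2^t}(i+1, j+1).
   C_1 = [1]; C_{2s} = [[C_s, C_s],[C_s, J - C_s]] (so C_2 = [[1,1],[1,0]]). *)
Fixpoint Cmat (t : nat) (i j : nat) : bool :=
  match t with
  | 0 => true
  | t'.+1 =>
      let s := (2 ^ t')%N in
      xorb (Cmat t' (i %% s) (j %% s)) ((s <= i)%N && (s <= j)%N)
  end.

Section Tree.
Variables (R : realFieldType) (X : Type) (t m n : nat).
Notation k := (2 ^ t)%N.
(* Leaf labelling: label y corresponds to the leaf reached by the sequence of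
   child indices lab y (a word of length m over 'I_k).  Internal nodes are the
   prefixes v : seq 'I_k of size < m; the children of v are rcons v j. *)
Variable lab : 'I_n -> m.-tuple 'I_k.

Definition subtree (v : seq 'I_k) : pred 'I_n :=
  fun y => take (size v) (lab y) == v.

Definition PS (P : X -> 'I_n -> R) (x : X) (S : pred 'I_n) : R :=
  \sum_(y | S y) P x y.

(* P_v(c_j | x); D v x is the arbitrary distribution used when P(T(v)|x) = 0 *)
Definition Pv (P : X -> 'I_n -> R) (D : seq 'I_k -> X -> 'I_k -> R)
    (x : X) (v : seq 'I_k) (j : 'I_k) : R :=
  let tv := PS P x (subtree v) in
  if 0 < tv then PS P x (subtree (rcons v j)) / tv else D v x j.

Definition PvS P D x v (S : pred 'I_k) : R := \sum_(j | S j) Pv P D x v j.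

Definition Yset (i : 'I_k) : pred 'I_k := fun j => Cmat t i j.

(* r_{v,1} := 1 (index 0 here), the others are the given regressors *)
Definition reg (r : seq 'I_k -> 'I_k -> X -> R) v (i : 'I_k) x : R :=
  if (i : nat) == 0%N then 1 else r v i x.

Definition Qv r x v (j : 'I_k) : R :=
  2 * (1 / k%:R) * \sum_(i < k)
      (if Cmat t i j then reg r v i x else 1 - reg r v i x) - 1.

Definition Q r x (y : 'I_n) : R :=
  \prod_(d < m) Qv r x (take d (lab y)) (tnth (lab y) d).

Definition eps2 r P D x (y : 'I_n) : R :=
  (1 / ((k%:R - 1) * m%:R)) *
  \sum_(d < m) \sum_(i < k | (i : nat) != 0%N)
     (r (take d (lab y)) i x - PvS P D x (take d (lab y)) (Yset i)) ^+ 2.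

End Tree.

From HB Require Import structures.
From mathcomp Require Import all_boot all_order all_algebra zify ring.

(* At one internal node the estimate Q_v(c_j) is an affine function of the
   k regressors r_{v,i}.  The matrix C_k is a 0/1 Sylvester-Hadamard matrix:
   two distinct columns agree in exactly k/2 rows and every column agrees
   with itself in all k rows (agreeE).  Consequently, feeding the node
   formula the exact masses P_v(Y_{v,i}) returns P_v(c_j) exactly
   (node_est_exact), so by linearity the node error is at most
   (2/k) * sum_{i>=2} |r_{v,i} - P_v(Y_{v,i})| (node_est_err).
   Along the root-to-y path the conditional probabilities P_v multiply to
   P(y) (path_prod), and since every factor of Q and of P has modulus at
   most 1, the difference of the two products is bounded by the sum of the
   node errors (prod_diff_le, path_error_le).  Squaring and applying
   Cauchy-Schwarz over the (k-1) m summands (sqr_double_sum_le) gives the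
   bound, up to an identity between the constants. *)

Set Implicit Arguments.
Unset Strict Implicit.
Unset Printing Implicit Defensive.

Import Order.TTheory GRing.Theory Num.Theory.

Lemma k_gt0 t : 0 < 2 ^ t.
Proof. by rewrite expn_gt0. Qed.

(* The first row of C_k is all ones; it encodes the trivial regressor r_{v,1} = 1. *)
Lemma Cmat_row0 t j : Cmat t 0 j.
Proof. by elim: t j => //= t IH j; rewrite mod0n IH leqn0 expn_eq0. Qed.

Definition agree t j l : nat := \sum_(i < 2 ^ t) (Cmat t i j == Cmat t i l).

(* Trivial bound, needed for the truncated subtraction in sum_disagree. *)
Lemma agree_le t j l : agree t j l <= 2 ^ t.
Proof.
rewrite -[X in _ <= X]card_ord -sum1_card.
by apply: leq_sum => i _; case: (_ == _).
Qed.

Lemma sum_disagree t j l :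
  \sum_(i < 2 ^ t) (Cmat t i j != Cmat t i l) = 2 ^ t - agree t j l.
Proof.
apply/eqP; rewrite -(eqn_add2r (agree t j l)) subnK ?agree_le // -big_split /=.
by rewrite -[X in _ == X]card_ord -sum1_card; apply/eqP/eq_bigr => i _; rewrite addn_negb.
Qed.

Lemma halves s z : z < s + s -> z = z %% s + s * (s <= z).
Proof.
move=> hz; case: leqP => h; last by rewrite muln0 addn0 modn_small.
rewrite muln1 -[z in z %% s](subnK h) modnDr modn_small ?subnK //.
by rewrite -(ltn_add2r s) subnK.
Qed.

(* The recursive block structure of C_{2s}: the upper half of rows repeats
   C_s, the lower half repeats C_s or its complement according to the halves
   containing j and l. *)
Lemma agreeS t j l :
  let s := 2 ^ t in
  agree t.+1 j l = agree t (j %% s) (l %% s) +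
    if (s <= j) == (s <= l) then agree t (j %% s) (l %% s)
    else s - agree t (j %% s) (l %% s).
Proof.
move=> s; rewrite /agree expnS mul2n -addnn -/s big_split_ord /= -/s.
congr (_ + _).
  apply: eq_bigr => i _; rewrite /= modn_small // !(leqNgt s i) ltn_ord /=.
  by case: (Cmat t i _); case: (Cmat t i _).
rewrite -[X in _ = (if _ then X else _)]/(agree t _ _) -sum_disagree.
case: ifP => he; apply: eq_bigr => i _;
  rewrite /= modnDl modn_small // leq_addr /=.
  by rewrite (eqP he); case: (Cmat t i _); case: (Cmat t i _); case: (s <= l).
by move: he; case: (Cmat t i _); case: (Cmat t i _); case: (s <= j); case: (s <= l).
Qed.

Lemma eq_halves s j l : j < s + s -> l < s + s ->
  (j == l) = (j %% s == l %% s) && ((s <= j) == (s <= l)).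
Proof.
move=> hj hl; apply/eqP/andP => [-> //|[/eqP hm /eqP hb]].
by rewrite (halves hj) (halves hl) hm hb.
Qed.

(* Hadamard property of C_k: distinct columns agree in exactly half of the
   rows (stated doubled to stay in nat). *)
Lemma agreeE t j l : j < 2 ^ t -> l < 2 ^ t ->
  (agree t j l).*2 = if j == l then (2 ^ t).*2 else 2 ^ t.
Proof.
elim: t j l => [|t IH] j l.
  by rewrite expn0 !ltnS !leqn0 => /eqP -> /eqP ->; rewrite /agree big_ord1.
rewrite agreeS expnS mul2n -addnn => hj hl.
rewrite (eq_halves hj hl).
have := IH _ _ (ltn_pmod j (k_gt0 t)) (ltn_pmod l (k_gt0 t)).
have := agree_le t (j %% 2 ^ t) (l %% 2 ^ t).
by case: (_ == _); case: (_ == _) => /=; lia.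
Qed.

Local Open Scope ring_scope.

Section NodeEstimator.
Variables (R : realFieldType) (t : nat).
Local Notation k := (2 ^ t)%N.

Definition node_est (g : 'I_k -> R) (j : 'I_k) : R :=
  2 * (1 / k%:R) * \sum_(i < k) (if Cmat t i j then g i else 1 - g i) - 1.

Definition row_mass (p : 'I_k -> R) (i : 'I_k) : R :=
  \sum_(l : 'I_k | Cmat t i l) p l.

Lemma node_est_bound (g : 'I_k -> R) (j : 'I_k) :
  (forall i, 0 <= g i <= 1) -> `|node_est g j| <= 1.
Proof.
move=> g01; rewrite /node_est; set S := \sum_(i < k) _.
have k0 : 0 < (k%:R : R) by rewrite ltr0n k_gt0.
have S0 : 0 <= S.
  by apply: sumr_ge0 => i _; have /andP[? ?] := g01 i; case: ifP; rewrite ?subr_ge0.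
have Sk : S <= k%:R.
  rewrite -[X in _ <= X%:R]card_ord -sumr_const; apply: ler_sum => i _.
  by have /andP[? ?] := g01 i; case: ifP; rewrite // lerBlDr lerDl.
have c_ge0 : 0 <= 2 * (1 / k%:R) :> R by rewrite mulr_ge0 ?divr_ge0.
rewrite ler_norml lerBrDr addrC subrr mulr_ge0 //= lerBlDr.
apply: le_trans (_ : 2 * (1 / k%:R) * k%:R <= _); first exact: ler_wpM2l.
by rewrite mul1r -mulrA mulVf ?gt_eqF // mulr1.
Qed.

Variable p : 'I_k -> R.
Hypothesis p_sum1 : \sum_l p l = 1.

Lemma row_term_agree (i j : 'I_k) :
  (if Cmat t i j then row_mass p i else 1 - row_mass p i)
  = \sum_l p l * (Cmat t i j == Cmat t i l : nat)%:R.
Proof.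
have -> : 1 - row_mass p i = \sum_(l : 'I_k | ~~ Cmat t i l) p l.
  by rewrite -p_sum1 (bigID (fun l : 'I_k => Cmat t i l)) /= addrC addrK.
rewrite [RHS](bigID (fun l : 'I_k => Cmat t i l)) /=.
case: (Cmat t i j).
  rewrite [X in _ + X]big1 ?addr0 => [|l /negbTE ->]; last by rewrite mulr0.
  by apply: eq_bigr => l ->; rewrite mulr1.
rewrite [X in X + _]big1 ?add0r => [|l ->]; last by rewrite mulr0.
by apply: eq_bigr => l /negbTE ->; rewrite mulr1.
Qed.

(* Exact regressors reproduce the distribution: C_k can be inverted. *)
Lemma node_est_exact (j : 'I_k) : node_est (row_mass p) j = p j.
Proof.
have k0 : (k%:R : R) != 0 by rewrite pnatr_eq0 -lt0n k_gt0.
have sum_agree : \sum_(i < k) (if Cmat t i j then row_mass p i else 1 - row_mass p i)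
    = \sum_l p l * (agree t j l)%:R.
  rewrite (eq_bigr _ (fun i _ => row_term_agree i j)) exchange_big /=.
  by apply: eq_bigr => l _; rewrite -mulr_sumr -natr_sum.
have twice l : 2 * (p l * (agree t j l)%:R)
    = k%:R * p l + (if l == j then k%:R * p l else 0).
  rewrite mulrCA -natrM mul2n agreeE // [(j : nat) == l]eq_sym.
  rewrite -[(l : nat) == j]/(l == j); case: eqP => [->|_]; last by rewrite addr0 mulrC.
  by rewrite -addnn natrD mulrDr mulrC.
rewrite /node_est sum_agree mulrAC mulr_sumr (eq_bigr _ (fun l _ => twice l)).
rewrite big_split /= -mulr_sumr p_sum1 mulr1 -big_mkcond big_pred1_eq.
by rewrite mul1r mulrDl mulfV // [k%:R * _]mulrC -mulrA mulfV // mulr1 addrC addKr.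
Qed.

(* Linearity of the node formula turns regressor errors into estimate
   errors; the trivial row i = 0 contributes nothing. *)
Lemma node_est_err (g : 'I_k -> R) (j : 'I_k) :
  (forall i : 'I_k, (i : nat) = 0%N -> g i = 1) ->
  `|node_est g j - p j|
  <= 2 * (1 / k%:R) * \sum_(i < k | (i : nat) != 0%N) `|g i - row_mass p i|.
Proof.
move=> g0; have c_ge0 : 0 <= 2 * (1 / k%:R) :> R by rewrite mulr_ge0 ?divr_ge0.
rewrite -{1}(node_est_exact j) /node_est opprB addrA subrK.
rewrite -mulrBr -sumrB normrM ger0_norm //; apply: ler_wpM2l => //.
apply: le_trans (ler_norm_sum _ _ _) _.
rewrite [X in _ <= X]big_mkcond /=; apply: ler_sum => i _.
case: (boolP ((i : nat) != 0%N)) => [_|/negbNE/eqP i0]; last first.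
  have mass1 : row_mass p i = 1.
    by rewrite -p_sum1; apply: eq_bigl => l; rewrite i0 Cmat_row0.
  by rewrite g0 // mass1 i0 Cmat_row0 subrr normr0.
by case: (Cmat t i j); rewrite // opprB addrC addrA subrK distrC.
Qed.

End NodeEstimator.

Lemma prod_diff_le (R : realFieldType) (I : Type) (s : seq I) (a b : I -> R) :
  (forall i, `|a i| <= 1) -> (forall i, `|b i| <= 1) ->
  `|\prod_(i <- s) a i - \prod_(i <- s) b i| <= \sum_(i <- s) `|a i - b i|.
Proof.
move=> a1 b1; elim: s => [|i s IH]; first by rewrite !big_nil subrr normr0.
rewrite !big_cons.
have -> : a i * \prod_(j <- s) a j - b i * \prod_(j <- s) b j
    = (a i - b i) * \prod_(j <- s) a j + b i * (\prod_(j <- s) a j - \prod_(j <- s) b j).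
  by rewrite mulrBl mulrBr addrA subrK.
apply: le_trans (ler_normD _ _) _; rewrite !normrM; apply: lerD.
  rewrite -[X in _ <= X]mulr1; apply: ler_wpM2l => //.
  by rewrite normr_prod; apply: prodr_ile1 => j _; rewrite normr_ge0 a1.
by rewrite -[X in _ <= X]mul1r; apply: ler_pM.
Qed.

Lemma sqr_sum_le (R : realFieldType) (I : finType) (A : pred I) (a : I -> R) :
  (\sum_(i | A i) a i) ^+ 2 <= #|A|%:R * \sum_(i | A i) a i ^+ 2.
Proof.
set S := \sum_(i | A i) a i ^+ 2.
suff : 2 * (\sum_(i | A i) a i) ^+ 2 <= 2 * (#|A|%:R * S) by rewrite ler_pM2l.
have -> : 2 * (#|A|%:R * S) = \sum_(i | A i) \sum_(j | A j) (a i ^+ 2 + a j ^+ 2).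
  rewrite (eq_bigr (fun i => a i ^+ 2 *+ #|A| + S)) => [|i _]; last first.
    by rewrite big_split /= sumr_const.
  by rewrite big_split /= sumr_const sumrMnl -/S !mulr_natl mulr2n.
rewrite expr2 mulr_suml mulr_sumr; apply: ler_sum => i _.
rewrite mulr_sumr mulr_sumr; apply: ler_sum => j _.
by rewrite -subr_ge0; have := sqr_ge0 (a i - a j); rewrite sqrrB mulr_natl addrAC.
Qed.

Lemma sqr_double_sum_le (R : realFieldType) (m : nat) (I : finType)
    (A : pred I) (a : 'I_m -> I -> R) :
  (\sum_(d < m) \sum_(i | A i) `|a d i|) ^+ 2
  <= (m * #|A|)%:R * \sum_(d < m) \sum_(i | A i) a d i ^+ 2.
Proof.
apply: le_trans (sqr_sum_le predT _) _.
rewrite cardT size_enum_ord natrM -mulrA; apply: ler_wpM2l => //.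
rewrite mulr_sumr; apply: ler_sum => d _.
apply: le_trans (sqr_sum_le _ _) _.
by rewrite (eq_bigr (fun i => a d i ^+ 2)) // => i _; rewrite real_normK ?num_real.
Qed.

(* Indices of the non-trivial regressors i = 2..k (0-based: i <> 0). *)
Definition nonzero_ord n : pred 'I_n := fun i => (i : nat) != 0%N.

Lemma card_nonzero_ord n : (0 < n)%N -> (#|@nonzero_ord n| = n.-1)%N.
Proof.
by move=> n0; rewrite -[in RHS](card_ord n) -(cardC1 (Ordinal n0)); apply: eq_card.
Qed.

Lemma sqr_le_of_norm_le (R : realFieldType) (z w : R) : `|z| <= w -> z ^+ 2 <= w ^+ 2.
Proof.
move=> h; rewrite -real_normK ?num_real // ler_sqr ?nnegrE //.
exact: le_trans h.
Qed.

Section Tree.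
Variables (R : realFieldType) (X : Type) (t m n : nat).
Local Notation k := (2 ^ t)%N.
Variable lab : 'I_n -> m.-tuple 'I_k.
Variable P : X -> 'I_n -> R.
Hypothesis P_ge0 : forall x y, 0 <= P x y.
Let child0 : 'I_k := Ordinal (k_gt0 t).

Lemma PS_ge0 x S : 0 <= PS P x S.
Proof. exact: sumr_ge0. Qed.

Lemma subtree_rcons v j y : (size v < m)%N ->
  subtree lab (rcons v j) y = subtree lab v y && (nth child0 (lab y) (size v) == j).
Proof.
move=> hv; rewrite /subtree size_rcons (take_nth child0) ?size_tuple //.
by rewrite eqseq_rcons.
Qed.

Lemma children_mass v x : (size v < m)%N ->
  \sum_(j < k) PS P x (subtree lab (rcons v j)) = PS P x (subtree lab v).
Proof.
move=> hv; rewrite /PS.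
under eq_bigr => j _ do rewrite (eq_bigl _ _ (fun y => subtree_rcons j y hv)).
by rewrite -(partition_big (fun y => nth child0 (lab y) (size v)) predT).
Qed.

Variable D : seq 'I_k -> X -> 'I_k -> R.
Hypothesis D_ge0 : forall v x j, (size v < m)%N -> 0 <= D v x j.
Hypothesis D_sum1 : forall v x, (size v < m)%N -> \sum_(j < k) D v x j = 1.

Lemma Pv_ge0 x v j : (size v < m)%N -> 0 <= Pv lab P D x v j.
Proof.
move=> hv; rewrite /Pv; case: ifP => h; last exact: D_ge0.
by rewrite divr_ge0 ?PS_ge0 // ltW.
Qed.

Lemma Pv_sum1 x v : (size v < m)%N -> \sum_j Pv lab P D x v j = 1.
Proof.
move=> hv; case: (boolP (0 < PS P x (subtree lab v))) => h.
  under eq_bigr do rewrite /Pv /= h.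
  by rewrite -mulr_suml children_mass // mulfV // gt_eqF.
under eq_bigr do rewrite /Pv /= (negbTE h).
exact: D_sum1.
Qed.

Lemma Pv_norm_le1 x v j : (size v < m)%N -> `|Pv lab P D x v j| <= 1.
Proof.
move=> hv; rewrite ger0_norm ?Pv_ge0 // -(Pv_sum1 x hv) (bigD1 j) //= lerDl.
by apply: sumr_ge0 => i _; apply: Pv_ge0.
Qed.

Hypothesis P_sum1 : forall x, \sum_(y < n) P x y = 1.
Hypothesis lab_inj : injective lab.

Lemma prefix_prod x y e : (e <= m)%N ->
  \prod_(0 <= d < e) Pv lab P D x (take d (lab y)) (nth child0 (lab y) d)
  = PS P x (subtree lab (take e (lab y))).
Proof.
elim: e => [_|e IH he].
  by rewrite big_nil /PS -(P_sum1 x); apply: eq_bigl => y'; rewrite /subtree !take0.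
have he' : (e < size (lab y))%N by rewrite size_tuple.
have ve : (size (take e (lab y)) < m)%N by rewrite size_takel // ltnW.
rewrite big_nat_recr //= IH; last exact: ltnW.
rewrite /Pv (take_nth child0 he') /=.
case: ifP => h; first by rewrite mulrC divfK // gt_eqF.
have mass0 : PS P x (subtree lab (take e (lab y))) = 0.
  by apply/eqP; rewrite eq_le PS_ge0 andbT leNgt h.
rewrite mass0 mul0r; apply/eqP; rewrite eq_le PS_ge0 /= -mass0.
rewrite -(children_mass x ve) (bigD1 (nth child0 (lab y) e)) //= lerDl.
by apply: sumr_ge0 => i _; apply: PS_ge0.
Qed.

Lemma path_prod x y :
  \prod_(d < m) Pv lab P D x (take d (lab y)) (tnth (lab y) d) = P x y.
Proof.
under eq_bigr => d _ do rewrite (tnth_nth child0).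
rewrite -(big_mkord xpredT
  (fun d => Pv lab P D x (take d (lab y)) (nth child0 (lab y) d))).
rewrite prefix_prod // take_oversize ?size_tuple // /PS.
rewrite (eq_bigl (pred1 y)) ?big_pred1_eq // => y'.
rewrite /subtree size_tuple take_oversize ?size_tuple //.
by apply/eqP/eqP => [/val_inj/lab_inj|->].
Qed.

Variable r : seq 'I_k -> 'I_k -> X -> R.
Hypothesis r01 : forall v (i : 'I_k) x, (size v < m)%N -> (i : nat) != 0%N ->
  0 <= r v i x <= 1.

Lemma path_error_le x y :
  `|Q lab r x y - P x y| <= 2 * (1 / k%:R) * \sum_(d < m)
     \sum_(i < k | (i : nat) != 0%N)
        `|r (take d (lab y)) i x - PvS lab P D x (take d (lab y)) (Yset i)|.
Proof.
have hv (d : 'I_m) : (size (take d (lab y)) < m)%N.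
  by rewrite size_takel ?size_tuple // ltnW.
have reg01 (d : 'I_m) i : 0 <= reg r (take d (lab y)) i x <= 1.
  by rewrite /reg; case: eqP => [_|/eqP]; [rewrite ler01 lexx | exact: r01].
rewrite /Q -(path_prod x y) mulr_sumr.
apply: le_trans (prod_diff_le _ _ _) _ => [d|d|].
- exact: node_est_bound.
- exact: Pv_norm_le1.
apply: ler_sum => d _.
set v := take d (lab y).
rewrite (eq_bigr (fun i => `|reg r v i x - row_mass (Pv lab P D x v) i|)) => [|i i0].
  apply: (node_est_err (g := fun i => reg r v i x) (Pv_sum1 x (hv d))).
  by move=> i i0; rewrite /reg i0.
by rewrite /reg (negbTE i0).
Qed.

End Tree.

Theorem theorem2 (R : realFieldType) (X : Type) (t m n : nat)
    (ht : (1 <= t)%N) (hm : (1 <= m)%N) (hn : n = ((2 ^ t) ^ m)%N)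
    (lab : 'I_n -> m.-tuple 'I_(2 ^ t)) (hlab : bijective lab)
    (P : X -> 'I_n -> R)
    (hP0 : forall x y, 0 <= P x y)
    (hP1 : forall x, \sum_(y < n) P x y = 1)
    (D : seq 'I_(2 ^ t) -> X -> 'I_(2 ^ t) -> R)
    (hD0 : forall v x j, (size v < m)%N -> 0 <= D v x j)
    (hD1 : forall v x, (size v < m)%N -> \sum_(j < 2 ^ t) D v x j = 1)
    (r : seq 'I_(2 ^ t) -> 'I_(2 ^ t) -> X -> R)
    (hr : forall v (i : 'I_(2 ^ t)) x, (size v < m)%N -> (i : nat) != 0%N ->
            0 <= r v i x <= 1)
    (x : X) (y : 'I_n) :
  (Q lab r x y - P x y) ^+ 2 <=
    4 * m%:R ^+ 2 * (((2 ^ t)%:R - 1) / (2 ^ t)%:R) ^+ 2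
      * eps2 lab r P D x y.
Proof.
pose e (d : 'I_m) (i : 'I_(2 ^ t)) :=
  r (take d (lab y)) i x - PvS lab P D x (take d (lab y)) (Yset i).
have path_err := path_error_le hP0 hD0 hD1 hP1 (bij_inj hlab) hr x y.
have cauchy := sqr_double_sum_le (@nonzero_ord (2 ^ t)) e.
rewrite card_nonzero_ord ?k_gt0 // natrM -subn1 natrB ?k_gt0 // in cauchy.
apply: le_trans (sqr_le_of_norm_le path_err) _.
rewrite exprMn; apply: le_trans (ler_wpM2l (sqr_ge0 _) cauchy) _.
have k_ge2 : (2 <= 2 ^ t)%N by rewrite -{1}(expn1 2) leq_pexp2l.
have k1_neq0 : (2 ^ t)%:R - 1 != 0 :> R.
  by rewrite subr_eq0 -(mulr1n 1) eqr_nat gtn_eqF.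
have k_neq0 : (2 ^ t)%:R != 0 :> R by rewrite pnatr_eq0 -lt0n k_gt0.
have m_neq0 : m%:R != 0 :> R by rewrite pnatr_eq0 -lt0n.
(* What remains is an identity between the constants. *)
rewrite le_eqVlt; apply/orP; left; apply/eqP; rewrite /eps2.
by field; rewrite k1_neq0 k_neq0 m_neq0.
Qed.
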